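(* Let $d,n,m\geq1$ be integers, and let $\mathsf{M}_1$ be an $n$-outcome POVM and $\mathsf{M}_2$ an $m$-outcome POVM on $\mathbb{C}^d$, with $$\bar P(\mathsf{M}_1,\mathsf{M}_2)=\frac{1}{2nm}\sum_{x=1}^n\sum_{y=1}^m\big\|\mathsf{M}_1(x)+\mathsf{M}_2(y)\big\|>\frac12\left(1+\frac{d}{nm}\right).$$ Then the joint measurability degree satisfies $$\mathsf{j}(\mathsf{M}_1,\mathsf{M}_2)\leq\frac{d+nm-(n+m)}{2nm\,\bar P(\mathsf{M}_1,\mathsf{M}_2)-(n+m)}.$$
   Context: $\|\cdot\|$ is the operator norm and $I$ the identity on $\mathbb{C}^d$. Two POVMs are compatible if there exists a POVM $\mathsf{G}(x,y)$ with marginals $\sum_y\mathsf{G}(x,y)=$ first POVM and $\sum_x\mathsf{G}(x,y)=$ second POVM. The joint measurability degree is $\mathsf{j}(\mathsf{M}_1,\mathsf{M}_2)=\max\{t\geq0 : \{t\mathsf{M}_i+(1-t)p_iI\}_{i=1,2}$ are compatible for some probability distributions $p_1$ on $\{1,\dots,n\}$ and $p_2$ on $\{1,\dots,m\}\}$. *)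

From HB Require Import structures.
From mathcomp Require Import all_boot all_order all_algebra.
From mathcomp Require Import complex.
From mathcomp Require Import all_classical all_reals ereal.
Set Implicit Arguments. Unset Strict Implicit. Unset Printing Implicit Defensive.
Import Order.TTheory GRing.Theory Num.Theory.
Local Open Scope ring_scope.
Local Open Scope complex_scope.
Local Open Scope classical_set_scope.

Section Defs.
Variable R : realType.
Local Notation C := R[i].

Definition adjmx (p q : nat) (A : 'M[C]_(p, q)) : 'M[C]_(q, p) :=
  (map_mx (@conjc R) A)^T.

(* positive semidefinite: <v, A v> >= 0 (i.e. real and nonnegative) for all v *)
Definition psd (d : nat) (A : 'M[C]_d) : Prop :=
  forall v : 'cV[C]_d, 0 <= (adjmx v *m A *m v) 0 0.

Definition is_povm (d : nat) (I : finType) (M : I -> 'M[C]_d) : Prop :=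
  (forall x, psd (M x)) /\ \sum_(x : I) M x = 1%:M.

Definition vnorm2 (d : nat) (v : 'cV[C]_d) : R :=
  \sum_(i < d) ((complex.Re (v i 0)) ^+ 2 + (complex.Im (v i 0)) ^+ 2).

Definition opnorm (d : nat) (A : 'M[C]_d) : R :=
  sup [set Num.sqrt (vnorm2 (A *m v)) | v in [set v : 'cV[C]_d | vnorm2 v = 1]].

Definition is_prob (n : nat) (p : 'I_n -> R) : Prop :=
  (forall x, 0 <= p x) /\ \sum_(x < n) p x = 1.

Definition compatible (d n m : nat) (A : 'I_n -> 'M[C]_d) (B : 'I_m -> 'M[C]_d) : Prop :=
  exists G : 'I_n -> 'I_m -> 'M[C]_d,
    (forall x y, psd (G x y)) /\ \sum_(x < n) \sum_(y < m) G x y = 1%:M /\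
    (forall x, \sum_(y < m) G x y = A x) /\
    (forall y, \sum_(x < n) G x y = B y).

Definition noisy (d n : nat) (t : R) (M : 'I_n -> 'M[C]_d) (p : 'I_n -> R) :
  'I_n -> 'M[C]_d :=
  fun x => (t%:C) *: M x + ((1 - t) * p x)%:C%:M.

Definition jm_set (d n m : nat) (M1 : 'I_n -> 'M[C]_d) (M2 : 'I_m -> 'M[C]_d) : set R :=
  [set t | 0 <= t /\ exists p1 p2, is_prob p1 /\ is_prob p2 /\
       compatible (noisy t M1 p1) (noisy t M2 p2)].

(* joint measurability degree j(M1,M2) = max of jm_set, taken as an extended-real
   supremum (the max, when it exists, equals this sup) *)
Definition jdeg (d n m : nat) (M1 : 'I_n -> 'M[C]_d) (M2 : 'I_m -> 'M[C]_d) : \bar R :=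
  ereal_sup [set t%:E | t in jm_set M1 M2].

Definition Pbar (d n m : nat) (M1 : 'I_n -> 'M[C]_d) (M2 : 'I_m -> 'M[C]_d) : R :=
  (2 * n%:R * m%:R)^-1 * \sum_(x < n) \sum_(y < m) opnorm (M1 x + M2 y).

End Defs.

From HB Require Import structures.
From mathcomp Require Import all_boot all_order all_algebra.
From mathcomp Require Import complex.
From mathcomp Require Import all_classical all_reals ereal.
From mathcomp Require Import ring lra.
Set Implicit Arguments. Unset Strict Implicit. Unset Printing Implicit Defensive.
Import Order.TTheory GRing.Theory Num.Theory.
Local Open Scope ring_scope.
Local Open Scope complex_scope.

(** Let [G] be a joint POVM of the noisy versions [t M1 + (1 - t) p1 I] and
  [t M2 + (1 - t) p2 I], and write [N x y] for the sum of its [x]-row and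
  [y]-column marginals. On the one hand [N x y <= G x y + I <= (tr G x y + 1) I],
  so [||N x y|| <= tr G x y + 1], and these bounds add up to [d + n m]. On the
  other hand [N x y = t (M1 x + M2 y) + (1 - t)(p1 x + p2 y) I], whose norm is at
  least [t ||M1 x + M2 y|| + (1 - t)(p1 x + p2 y)]; these add up to
  [2 n m t Pbar + (1 - t)(n + m)]. Comparing the two sums and solving for [t]
  gives the bound, the denominator being positive by the hypothesis on [Pbar]. *)

Section ComplexReal.
Variable R : realType.
Local Notation Re := (@complex.Re R).
Local Notation Im := (@complex.Im R).

Lemma Re_ge0 (z : R[i]) : 0 <= z -> 0 <= Re z.
Proof. by rewrite lecE => /andP[]. Qed.

(* [|x^* g y| <= |x| |y| sqrt (a b)], followed by AM-GM. *)
Lemma Re_conjMM_le (x y g : R[i]) (a b : R) : 0 <= a -> 0 <= b ->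
  Re g ^+ 2 + Im g ^+ 2 <= a * b ->
  Re (x^* * (g * y)) <= ((Re x ^+ 2 + Im x ^+ 2) * b + (Re y ^+ 2 + Im y ^+ 2) * a) / 2.
Proof.
case: x => x1 x2; case: y => y1 y2; case: g => g1 g2 /= ha hb hg.
set P := x1 ^+ 2 + x2 ^+ 2; set Q := y1 ^+ 2 + y2 ^+ 2.
set a1 := x1 * y1 + x2 * y2; set a2 := x1 * y2 - x2 * y1.
set L := (_ - _).
have eL : L = a1 * g1 - a2 * g2 by rewrite /L /a1 /a2; ring.
have ePQ : a1 ^+ 2 + a2 ^+ 2 = P * Q by rewrite /a1 /a2 /P /Q; ring.
have hP : 0 <= P by rewrite /P; apply: addr_ge0; apply: sqr_ge0.
have hQ : 0 <= Q by rewrite /Q; apply: addr_ge0; apply: sqr_ge0.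
have L2_le : L ^+ 2 <= P * Q * (a * b).
  rewrite -ePQ; apply: le_trans (ler_wpM2l (addr_ge0 (sqr_ge0 a1) (sqr_ge0 a2)) hg).
  rewrite eL -subr_ge0.
  have -> : (a1 ^+ 2 + a2 ^+ 2) * (g1 ^+ 2 + g2 ^+ 2) - (a1 * g1 - a2 * g2) ^+ 2
    = (a1 * g2 + a2 * g1) ^+ 2 by ring.
  exact: sqr_ge0.
set M := (P * b + Q * a) / 2.
have hM : 0 <= M by rewrite /M; apply: divr_ge0 => //; apply: addr_ge0; apply: mulr_ge0.
have amgm : P * Q * (a * b) <= M ^+ 2.
  rewrite -subr_ge0.
  have -> : M ^+ 2 - P * Q * (a * b) = ((P * b - Q * a) / 2) ^+ 2 by rewrite /M; field.
  exact: sqr_ge0.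
nra.
Qed.

End ComplexReal.

(* Evaluate at the vertex [s = 1 / b], or far out when [b = 0]. *)
Lemma le_mul_of_quadratic_ge0 (R : realFieldType) (a b N : R) :
  0 <= a -> 0 <= b -> 0 <= N ->
  (forall s, 0 <= a - 2 * s * N + s ^+ 2 * N * b) -> N <= a * b.
Proof.
move=> a0 b0 N0 H; have [->|Nneq0] := eqVneq N 0; first exact: mulr_ge0.
have Npos : 0 < N by rewrite lt_def Nneq0 N0.
have [b_eq0|bneq0] := eqVneq b 0.
  have := H ((a + 1) / (2 * N)); rewrite b_eq0 mulr0 addr0.
  have -> : 2 * ((a + 1) / (2 * N)) * N = a + 1 by field; rewrite gt_eqF.
  lra.
have bpos : 0 < b by rewrite lt_def bneq0 b0.
have := H b^-1.
have -> : a - 2 * b^-1 * N + b^-1 ^+ 2 * N * b = (a * b - N) / b by field; rewrite gt_eqF.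
by rewrite pmulr_lge0 ?invr_gt0 // subr_ge0.
Qed.

Section PsdForms.
Variable R : realType.
Local Notation C := R[i].
Local Notation Re := (@complex.Re R).
Local Notation Im := (@complex.Im R).
Variable d : nat.
Implicit Types (u v w : 'cV[C]_d) (A X : 'M[C]_d).

Definition cdot u w : C := \sum_k (u k 0)^* * w k 0.

Definition qform X u : R := Re (cdot u (X *m u)).

Lemma psdE A : psd A <-> forall v, 0 <= cdot v (A *m v).
Proof.
suff eq v : (adjmx v *m A *m v) 0 0 = cdot v (A *m v) by split=> H v; rewrite ?eq // -eq.
by rewrite -mulmxA !mxE; apply: eq_bigr => k _; rewrite !mxE.
Qed.

Lemma cdotDl u v w : cdot (u + v) w = cdot u w + cdot v w.
Proof. by rewrite /cdot -big_split; apply: eq_bigr => k _; rewrite !mxE rmorphD mulrDl. Qed.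

Lemma cdotZl k u w : cdot (k *: u) w = k^* * cdot u w.
Proof. by rewrite /cdot mulr_sumr; apply: eq_bigr => i _; rewrite !mxE rmorphM mulrA. Qed.

Lemma cdotDr u v w : cdot u (v + w) = cdot u v + cdot u w.
Proof. by rewrite /cdot -big_split; apply: eq_bigr => k _; rewrite !mxE mulrDr. Qed.

Lemma cdotZr k u w : cdot u (k *: w) = k * cdot u w.
Proof. by rewrite /cdot mulr_sumr; apply: eq_bigr => i _; rewrite !mxE mulrCA. Qed.

Lemma cdot_sumr (I : finType) (P : pred I) u (F : I -> 'cV[C]_d) :
  cdot u (\sum_(i | P i) F i) = \sum_(i | P i) cdot u (F i).
Proof. by rewrite /cdot exchange_big; apply: eq_bigr => k _; rewrite summxE mulr_sumr. Qed.

Lemma cdotii u : cdot u u = (vnorm2 u)%:C.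
Proof.
rewrite /cdot /vnorm2 rmorph_sum; apply: eq_bigr => k _.
case: (u k 0) => a b; apply/eqP; rewrite eq_complex /=.
by apply/andP; split; apply/eqP; ring.
Qed.

Lemma cdot_delta_mxl i w : cdot (delta_mx i 0) w = w i 0.
Proof.
rewrite /cdot (bigD1 i) //= big1 => [|k /negbTE ki]; rewrite !mxE ?eqxx ?ki /=.
  by rewrite addr0; case: (w i 0) => a b; simpc.
by case: (w k 0) => a b; simpc.
Qed.

Lemma cdot_delta_mx A i j : cdot (delta_mx i 0) (A *m delta_mx j 0) = A i j.
Proof. by rewrite cdot_delta_mxl -colE mxE. Qed.

Lemma qformD A B u : qform (A + B) u = qform A u + qform B u.
Proof. by rewrite /qform mulmxDl cdotDr raddfD. Qed.

Lemma qform_sum (I : finType) (P : pred I) (F : I -> 'M[C]_d) u :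
  qform (\sum_(i | P i) F i) u = \sum_(i | P i) qform (F i) u.
Proof. by rewrite /qform mulmx_suml cdot_sumr raddf_sum. Qed.

Lemma qform1 u : qform 1%:M u = vnorm2 u.
Proof. by rewrite /qform mul1mx cdotii. Qed.

Lemma vnorm2_ge0 u : 0 <= vnorm2 u.
Proof. by apply: sumr_ge0 => k _; apply: addr_ge0; apply: sqr_ge0. Qed.

Lemma vnorm2Z (r : R) u : vnorm2 (r%:C *: u) = r ^+ 2 * vnorm2 u.
Proof.
rewrite /vnorm2 mulr_sumr; apply: eq_bigr => k _; rewrite !mxE.
by case: (u k 0) => a b /=; ring.
Qed.

Lemma vnorm2_eq0 u : vnorm2 u = 0 -> u = 0.
Proof.
move=> u0; apply/matrixP => i j; rewrite ord1 mxE.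
have summand_ge0 k : true -> 0 <= Re (u k 0) ^+ 2 + Im (u k 0) ^+ 2.
  by move=> _; apply: addr_ge0; apply: sqr_ge0.
have /(_ i isT) := psumr_eq0P summand_ge0 u0.
case: (u i 0) => a b /= ab0; apply/eqP; rewrite eq_complex /=.
by apply/andP; split; apply/eqP; nra.
Qed.

Lemma vnorm2_delta_mx i : vnorm2 (delta_mx i 0 : 'cV[C]_d) = 1.
Proof.
rewrite /vnorm2 (bigD1 i) //= big1 => [|k /negbTE ki]; rewrite !mxE ?eqxx ?ki /=.
  by rewrite expr1n expr0n /= !addr0.
by rewrite expr0n /= addr0.
Qed.

Lemma psdD A B : psd A -> psd B -> psd (A + B).
Proof. by move=> /psdE hA /psdE hB; apply/psdE => v; rewrite mulmxDl cdotDr addr_ge0. Qed.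

Lemma psd0 : psd (0 : 'M[C]_d).
Proof. by apply/psdE => v; rewrite mul0mx /cdot big1 // => k _; rewrite mxE mulr0. Qed.

Lemma psd_sum (I : finType) (P : pred I) (F : I -> 'M[C]_d) :
  (forall i, psd (F i)) -> psd (\sum_(i | P i) F i).
Proof. by move=> h; apply: (big_ind (@psd R d)) => //; [exact: psd0|exact: psdD]. Qed.

Lemma psd1 : psd (1%:M : 'M[C]_d).
Proof. by apply/psdE => v; rewrite mul1mx cdotii ler0c vnorm2_ge0. Qed.

Lemma qform_ge0 X u : psd X -> 0 <= qform X u.
Proof. by move=> /psdE hX; apply: Re_ge0. Qed.

Lemma cdot_expand X u v k : cdot (u + k *: v) (X *m (u + k *: v)) =
  cdot u (X *m u) + k * cdot u (X *m v) + k^* * cdot v (X *m u) + k^* * k * cdot v (X *m v).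
Proof. by rewrite mulmxDr -scalemxAr cdotDl !cdotDr !cdotZl !cdotZr; ring. Qed.

(* Positivity of the form along [u + v] and [u + 'i v]. *)
Lemma psd_cdotC X u v : psd X -> cdot v (X *m u) = (cdot u (X *m v))^*.
Proof.
move=> /psdE hX; move: (hX u) (hX v) (hX (u + 1 *: v)) (hX (u + 'i *: v)).
rewrite !cdot_expand; move: (cdot u _) (cdot v _) (cdot u _) (cdot v _).
case=> a1 a2 [b1 b2] [z1 z2] [w1 w2].
rewrite !lecE /= => /andP[/eqP ? ?] /andP[/eqP ? ?] /andP[/eqP ? ?] /andP[/eqP ? ?].
by congr (_ +i* _); lra.
Qed.

Lemma psd_cauchy_schwarz X u v : psd X ->
  Re (cdot u (X *m v)) ^+ 2 + Im (cdot u (X *m v)) ^+ 2 <= qform X u * qform X v.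
Proof.
move=> hX; have /psdE hXf := hX.
apply: le_mul_of_quadratic_ge0; [exact: qform_ge0|exact: qform_ge0|nra|] => s.
have := hXf (u + (- s%:C * (cdot u (X *m v))^*) *: v).
rewrite cdot_expand (psd_cdotC u v hX) /qform; have := hXf u; have := hXf v.
move: (cdot u (X *m u)) (cdot v (X *m v)) (cdot u (X *m v)) => [a1 a2] [b1 b2] [z1 z2].
rewrite !lecE /= => /andP[/eqP -> _] /andP[/eqP -> _] /andP[_].
by move=> h; apply: le_trans h _; rewrite le_eqVlt; apply/orP; left; apply/eqP; ring.
Qed.

(* Cauchy-Schwarz at [X v] and [v]: [||X v||^4 <= qform X (X v) * qform X v]. *)
Lemma psd_vnorm2_le X lam v : psd X ->
  (forall u, qform X u <= lam * vnorm2 u) -> vnorm2 (X *m v) <= lam ^+ 2 * vnorm2 v.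
Proof.
move=> hX H; have := psd_cauchy_schwarz (X *m v) v hX.
rewrite cdotii /= expr0n /= addr0.
have := H v; have := H (X *m v).
have := qform_ge0 v hX; have := qform_ge0 (X *m v) hX.
have := vnorm2_ge0 (X *m v); have := vnorm2_ge0 v.
set N := vnorm2 (X *m v); set V := vnorm2 v.
move=> V0 N0 qXv0 qv0 le_qXv le_qv CS.
have N2_le : N ^+ 2 <= lam ^+ 2 * V * N by nra.
have [->|Nneq0] := eqVneq N 0; first by nra.
have Npos : 0 < N by rewrite lt_def Nneq0 N0.
by rewrite -(ler_pM2r Npos); nra.
Qed.

Lemma qform_le_trace G u : psd G -> qform G u <= Re (\tr G) * vnorm2 u.
Proof.
move=> hG.
set P := fun i => Re (u i 0) ^+ 2 + Im (u i 0) ^+ 2.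
set B := fun i => Re (G i i).
have B0 i : 0 <= B i by rewrite /B -cdot_delta_mx; apply: qform_ge0.
have Gij i j : Re (G i j) ^+ 2 + Im (G i j) ^+ 2 <= B i * B j.
  by rewrite /B -!cdot_delta_mx; apply: psd_cauchy_schwarz.
have -> : qform G u = \sum_i \sum_j Re ((u i 0)^* * (G i j * u j 0)).
  by rewrite /qform /cdot raddf_sum; apply: eq_bigr => i _; rewrite mxE mulr_sumr raddf_sum.
apply: (@le_trans _ _ (\sum_i \sum_j (P i * B j + P j * B i) / 2)).
  by do 2 (apply: ler_sum => ? _); apply: Re_conjMM_le.
have -> : Re (\tr G) = \sum_i B i by rewrite /mxtrace raddf_sum.
have sumPB : \sum_i \sum_j P i * B j = (\sum_i B i) * vnorm2 u.
  by rewrite mulrC big_distrl; apply: eq_bigr => i _; rewrite big_distrr.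
have -> : \sum_i \sum_j (P i * B j + P j * B i) / 2 =
    (\sum_i \sum_j P i * B j + \sum_i \sum_j P j * B i) / 2.
  by rewrite -big_split /= mulr_suml; apply: eq_bigr => i _; rewrite -big_split mulr_suml.
have sumPB' : \sum_i \sum_j P j * B i = (\sum_i B i) * vnorm2 u by rewrite exchange_big.
rewrite sumPB sumPB'; lra.
Qed.

Lemma psd_sqrt_le_opnorm A v : psd A -> vnorm2 v = 1 ->
  Num.sqrt (vnorm2 (A *m v)) <= opnorm A.
Proof.
move=> hA v1; apply: sup_upper_bound; last by exists v.
split; first by exists (Num.sqrt (vnorm2 (A *m v))), v.
exists `|Re (\tr A)| => _ [w w1 <-]; rewrite -sqrtr_sqr.
apply: ler_wsqrtr; rewrite -[X in _ <= X]mulr1 -w1.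
exact: psd_vnorm2_le hA (fun u => qform_le_trace u hA).
Qed.

Lemma psd_vnorm2_le_opnorm A u : psd A -> vnorm2 (A *m u) <= opnorm A ^+ 2 * vnorm2 u.
Proof.
move=> hA; have [u0|unz] := eqVneq (vnorm2 u) 0.
  rewrite u0 mulr0 (vnorm2_eq0 u0) mulmx0 /vnorm2 big1 // => k _.
  by rewrite mxE /= expr0n /= addr0.
have upos : 0 < vnorm2 u by rewrite lt_def unz vnorm2_ge0.
set k := (Num.sqrt (vnorm2 u))^-1.
have k2u : k ^+ 2 * vnorm2 u = 1 by rewrite exprVn sqr_sqrtr ?vnorm2_ge0 // mulVf.
have := psd_sqrt_le_opnorm hA (v := k%:C *: u); rewrite vnorm2Z k2u -scalemxAr vnorm2Z.
move=> /(_ erefl) le_opnorm.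
have k2Au : k ^+ 2 * vnorm2 (A *m u) <= opnorm A ^+ 2.
  rewrite -(sqr_sqrtr (mulr_ge0 (sqr_ge0 k) (vnorm2_ge0 (A *m u)))).
  by rewrite ler_sqr ?nnegrE ?sqrtr_ge0 // (le_trans (sqrtr_ge0 _) le_opnorm).
by rewrite -[vnorm2 (A *m u)]mul1r -k2u mulrAC ler_wpM2r ?vnorm2_ge0.
Qed.

Section PositiveDimension.
Hypothesis d_gt0 : (0 < d)%N.
Let e0 : 'cV[C]_d := delta_mx (Ordinal d_gt0) 0.

Lemma opnorm_le A c : 0 <= c ->
  (forall v, vnorm2 v = 1 -> vnorm2 (A *m v) <= c ^+ 2) -> opnorm A <= c.
Proof.
move=> c0 H; apply: ge_sup.
  by exists (Num.sqrt (vnorm2 (A *m e0))), e0 => //; apply: vnorm2_delta_mx.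
by move=> _ [v v1 <-]; rewrite -(ger0_norm c0) -sqrtr_sqr; apply/ler_wsqrtr/H.
Qed.

Lemma psd_opnorm_le X lam : psd X ->
  (forall u, qform X u <= lam * vnorm2 u) -> opnorm X <= lam.
Proof.
move=> hX H; have lam0 : 0 <= lam.
  by have := H e0; rewrite vnorm2_delta_mx mulr1; apply: le_trans; apply: qform_ge0.
by apply: opnorm_le => // v v1; rewrite -[lam ^+ 2]mulr1 -v1; apply: psd_vnorm2_le.
Qed.

Lemma opnorm_ge0 A : psd A -> 0 <= opnorm A.
Proof.
by move=> hA; apply: le_trans (psd_sqrt_le_opnorm hA (vnorm2_delta_mx (Ordinal d_gt0))).
Qed.

(* Cauchy-Schwarz for the standard inner product, [|<u, A u>|^2 <= ||u||^2 ||A u||^2]. *)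
Lemma psd_qform_le_opnorm A u : psd A -> qform A u <= opnorm A * vnorm2 u.
Proof.
move=> hA; have := psd_cauchy_schwarz u (A *m u) psd1; rewrite mul1mx !qform1 -/(qform A u).
have := psd_vnorm2_le_opnorm u hA; have := vnorm2_ge0 u; have := sqr_ge0 (Im (cdot u (A *m u))).
move=> Im2 u0 le_Au le_q2.
rewrite -ler_sqr ?nnegrE ?qform_ge0 ?mulr_ge0 ?opnorm_ge0 ?vnorm2_ge0 //.
by apply: le_trans (_ : _ <= vnorm2 u * vnorm2 (A *m u)) _; nra.
Qed.

Lemma opnorm_shift_ge X t c : psd X -> 0 <= t -> psd (t%:C *: X + (c%:C)%:M) ->
  t * opnorm X + c <= opnorm (t%:C *: X + (c%:C)%:M).
Proof.
move=> hX t0; set N := _ + _ => hN.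
have qformN u : qform N u = t * qform X u + c * vnorm2 u.
  rewrite /qform mulmxDl -scalemxAl mul_scalar_mx cdotDr !cdotZr cdotii.
  by case: (cdot u (X *m u)) => a b /=; ring.
have [t_eq0|tneq0] := eqVneq t 0.
  by have := psd_qform_le_opnorm e0 hN; rewrite qformN t_eq0 vnorm2_delta_mx; lra.
have tpos : 0 < t by rewrite lt_def tneq0 t0.
suff : opnorm X <= (opnorm N - c) / t by rewrite ler_pdivlMr // mulrC; lra.
apply: psd_opnorm_le => // u; rewrite mulrAC ler_pdivlMr //.
by have := psd_qform_le_opnorm u hN; rewrite qformN; nra.
Qed.

End PositiveDimension.
End PsdForms.

Section JointPOVM.
Variables (R : realType) (d n m : nat).
Local Notation C := R[i].
Local Notation Re := (@complex.Re R).
Variable G : 'I_n -> 'I_m -> 'M[C]_d.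
Hypothesis G_psd : forall x y, psd (G x y).
Hypothesis G_sum1 : \sum_x \sum_y G x y = 1%:M.

(* The row [x] and the column [y] of [G] overlap only in [G x y]. *)
Lemma qform_marginals_le x y u :
  qform (\sum_y' G x y' + \sum_x' G x' y) u <= (Re (\tr (G x y)) + 1) * vnorm2 u.
Proof.
have g0 x' y' : 0 <= qform (G x' y') u := qform_ge0 u (G_psd x' y').
have total : \sum_x' \sum_y' qform (G x' y') u = vnorm2 u.
  by rewrite -qform1 -G_sum1 qform_sum; under [RHS]eq_bigr do rewrite qform_sum.
have overlap : \sum_y' qform (G x y') u + \sum_x' qform (G x' y) u <=
    qform (G x y) u + \sum_x' \sum_y' qform (G x' y') u.
  rewrite (bigD1 x (P := predT) (F := fun x' => qform (G x' y) u)) //=.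
  rewrite (bigD1 x (P := predT) (F := fun x' => \sum_y' qform (G x' y') u)) //=.
  rewrite addrCA lerD2l lerD2l; apply: ler_sum => x' _.
  by rewrite (bigD1 y) //= lerDl; apply: sumr_ge0 => y' _; apply: g0.
rewrite qformD !qform_sum; apply: le_trans overlap _.
by rewrite total mulrDl mul1r lerD2r qform_le_trace.
Qed.

Lemma opnorm_marginals_le x y : (0 < d)%N ->
  opnorm (\sum_y' G x y' + \sum_x' G x' y) <= Re (\tr (G x y)) + 1.
Proof.
move=> d_gt0; apply: (psd_opnorm_le d_gt0 _ (qform_marginals_le x y)).
by apply: psdD; apply: psd_sum.
Qed.

Lemma sum_Re_trace : \sum_x \sum_y Re (\tr (G x y)) = d%:R.
Proof.
have := congr1 (fun A => Re (\tr A)) G_sum1.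
rewrite /= mxtrace1 -(rmorph_nat (real_complex R)) /= => <-.
rewrite (raddf_sum (@mxtrace C d)) raddf_sum; apply: eq_bigr => x _.
by rewrite (raddf_sum (@mxtrace C d)) raddf_sum.
Qed.

End JointPOVM.

Section NoisyPOVMs.
Variables (R : realType) (d n m : nat).
Local Notation C := R[i].
Local Notation Re := (@complex.Re R).
Variables (M1 : 'I_n -> 'M[C]_d) (M2 : 'I_m -> 'M[C]_d).

Lemma noisy_addE t p1 p2 x y :
  noisy t M1 p1 x + noisy t M2 p2 y =
  t%:C *: (M1 x + M2 y) + (((1 - t) * (p1 x + p2 y))%:C)%:M.
Proof. by rewrite /noisy scalerDr mulrDr rmorphD raddfD /= addrACA. Qed.

Lemma sum_prob_marginals (p1 : 'I_n -> R) (p2 : 'I_m -> R) :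
  is_prob p1 -> is_prob p2 -> \sum_x \sum_y (p1 x + p2 y) = n%:R + m%:R.
Proof.
move=> [_ p1_sum1] [_ p2_sum1].
under eq_bigr do rewrite big_split /= sumr_const card_ord p2_sum1.
by rewrite big_split /= sumrMnl p1_sum1 sumr_const card_ord addrC.
Qed.

(* Summing [t ||M1 x + M2 y|| + (1 - t)(p1 x + p2 y) <= ||N x y|| <= tr G x y + 1]
   over all outcome pairs. *)
Lemma jm_set_weighted_le t : (0 < d)%N -> is_povm M1 -> is_povm M2 ->
  jm_set M1 M2 t ->
  t * \sum_x \sum_y opnorm (M1 x + M2 y) + (1 - t) * (n%:R + m%:R) <=
  d%:R + n%:R * m%:R.
Proof.
move=> d_gt0 [M1_psd _] [M2_psd _] [t0 [p1 [p2 [p1P [p2P [G [G_psd [G_sum1 [G1 G2]]]]]]]]].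
have pair_le x y : t * opnorm (M1 x + M2 y) + (1 - t) * (p1 x + p2 y) <=
    Re (\tr (G x y)) + 1.
  have eN : noisy t M1 p1 x + noisy t M2 p2 y = \sum_y' G x y' + \sum_x' G x' y.
    by rewrite G1 G2.
  apply: le_trans (opnorm_marginals_le G_psd G_sum1 x y d_gt0).
  rewrite -eN noisy_addE; apply: opnorm_shift_ge => //; first exact: psdD.
  by rewrite -noisy_addE eN; apply: psdD; apply: psd_sum.
have lhsE : \sum_x \sum_y (t * opnorm (M1 x + M2 y) + (1 - t) * (p1 x + p2 y)) =
    t * \sum_x \sum_y opnorm (M1 x + M2 y) + (1 - t) * (n%:R + m%:R).
  rewrite -(sum_prob_marginals p1P p2P) !mulr_sumr -big_split.
  by apply: eq_bigr => x _; rewrite !mulr_sumr -big_split.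
have rhsE : \sum_x \sum_y (Re (\tr (G x y)) + 1) = d%:R + n%:R * m%:R.
  have -> : n%:R * m%:R = \sum_(x < n) \sum_(y < m) 1 :> R.
    by rewrite !sumr_const !card_ord -mulrnA mulnC natrM.
  rewrite -(sum_Re_trace G_sum1) -big_split.
  by apply: eq_bigr => x _; rewrite -big_split.
rewrite -lhsE -rhsE.
by apply: ler_sum => x _; apply: ler_sum => y _; apply: pair_le.
Qed.

Lemma mulPbar : (0 < n)%N -> (0 < m)%N ->
  2 * n%:R * m%:R * Pbar M1 M2 = \sum_x \sum_y opnorm (M1 x + M2 y).
Proof.
by move=> n_gt0 m_gt0; rewrite /Pbar mulrA mulfV ?mul1r // !mulf_neq0 ?pnatr_eq0 -?lt0n.
Qed.

End NoisyPOVMs.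

Theorem mainTheorem5 (R : realType) (d n m : nat)
  (hd : (1 <= d)%N) (hn : (1 <= n)%N) (hm : (1 <= m)%N)
  (M1 : 'I_n -> 'M[R[i]]_d) (M2 : 'I_m -> 'M[R[i]]_d)
  (hM1 : is_povm M1) (hM2 : is_povm M2)
  (hP : Pbar M1 M2 > 2^-1 * (1 + d%:R / (n%:R * m%:R))) :
  (jdeg M1 M2 <=
    ((d%:R + n%:R * m%:R - (n%:R + m%:R)) /
     (2 * n%:R * m%:R * Pbar M1 M2 - (n%:R + m%:R)))%:E)%E.
Proof.
rewrite mulPbar //; set S := \sum_x \sum_y _.
have nR : 1 <= n%:R :> R by rewrite ler1n.
have mR : 1 <= m%:R :> R by rewrite ler1n.
have dR : 1 <= d%:R :> R by rewrite ler1n.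
have S_gt : n%:R * m%:R + d%:R < S.
  move: hP; rewrite -(ltr_pM2l (_ : 0 < 2 * n%:R * m%:R)) ?mulPbar //; last by nra.
  suff -> : 2 * n%:R * m%:R * (2^-1 * (1 + d%:R / (n%:R * m%:R))) = n%:R * m%:R + d%:R :> R
    by [].
  by field; rewrite !pnatr_eq0 -!lt0n hn hm.
rewrite /jdeg; apply/ereal_supP => _ [t ht <-]; rewrite lee_fin.
have := jm_set_weighted_le hd hM1 hM2 ht; rewrite -/S => weighted_le.
have nm_le : n%:R + m%:R <= n%:R * m%:R + d%:R :> R by nra.
rewrite ler_pdivlMr; [nra | lra].
Qed.
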